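(* Let \(a,b,c\) be positive integers, \(m\) a positive integer that is not a perfect square, with \(\gcd(a,b^2-c^2m)=1\), and let \(A,B\in\mathbb Z\). Let \((\bar x,\bar y,\bar z,\bar w)\) be the unique element of \(\mathbb Z^4\) with \(0\leq\bar z,\bar w<a\) satisfying \(a(\bar x+\bar y\sqrt m)+(b+c\sqrt m)(\bar z+\bar w\sqrt m)=A+B\sqrt m\). Then the equation \(a(x+y\sqrt m)+(b+c\sqrt m)(z+w\sqrt m)=A+B\sqrt m\) has a solution with \(x,y,z,w\in\mathbb N\) if and only if \(\bar x\geq 0\) and \(\bar y\geq 0\).
   Context: \(\mathbb N\) denotes the set of non-negative integers. (Existence and uniqueness of \((\bar x,\bar y,\bar z,\bar w)\) under the stated hypotheses may be assumed.) *)

From Stdlib Require Export Reals ZArith.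
Open Scope R_scope.

Definition qsurd (m u v : Z) : R := IZR u + IZR v * sqrt (IZR m).

Definition is_square (m : Z) : Prop := exists k : Z, m = (k * k)%Z.

(* Since √m is irrational, an equation in Z[√m] splits into two integer
   equations.  Subtracting the reduced solution from a natural one gives
   a(p + q√m) = (b + c√m)(s + t√m); multiplying by the conjugate b - c√m
   shows that a divides (b² - c²m)s and (b² - c²m)t, hence s and t by
   coprimality.  Writing s = ak, t = al and cancelling a yields
   p + q√m = (b + c√m)(k + l√m), and k, l ≥ 0 because the reduced z̄, w̄ lie
   in [0, a).  So x̄, ȳ dominate the coordinates of any natural solution. *)

From Stdlib Require Import Reals ZArith Lia Lra Psatz.
Open Scope R_scope.

Lemma is_square_of_mul_sq_eq_sq (m u v : Z) :
  v <> 0%Z -> (m * (v * v) = u * u)%Z -> is_square m.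
Proof.
  intros hv he.
  set (g := Z.gcd u v).
  assert (hg : g <> 0%Z) by (intro H; apply Z.gcd_eq_0 in H; lia).
  destruct (Z.gcd_divide_l u v) as [u1 Hu].
  destruct (Z.gcd_divide_r u v) as [v1 Hv].
  fold g in Hu, Hv.
  assert (hcop : Z.gcd u1 v1 = 1%Z).
  { replace u1 with (u / g)%Z by (rewrite Hu, Z.div_mul; auto).
    replace v1 with (v / g)%Z by (rewrite Hv, Z.div_mul; auto).
    apply Z.gcd_div_gcd; auto. }
  assert (he1 : (m * (v1 * v1) = u1 * u1)%Z).
  { apply (Z.mul_reg_r _ _ (g * g)); [nia|].
    rewrite Hu, Hv in he. lia. }
  assert (hvu : (v1 | u1)%Z).
  { apply (Z.gauss _ u1); [exists (m * v1)%Z; lia | now rewrite Z.gcd_comm]. }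
  assert (hv1 : (v1 | 1)%Z).
  { rewrite <- hcop. apply Z.gcd_greatest; auto using Z.divide_refl. }
  exists u1. apply Z.divide_1_r in hv1. destruct hv1; subst v1; lia.
Qed.

Lemma sqrt_sqrt_IZR (m : Z) : (0 <= m)%Z -> sqrt (IZR m) * sqrt (IZR m) = IZR m.
Proof. intros hm. apply sqrt_sqrt, IZR_le, hm. Qed.

Lemma qsurd_eq0 (m u v : Z) : (0 < m)%Z -> ~ is_square m ->
  qsurd m u v = 0 -> u = 0%Z /\ v = 0%Z.
Proof.
  unfold qsurd. intros hm hsq h.
  destruct (Z.eq_dec v 0) as [->|hv].
  - split; auto. apply eq_IZR. lra.
  - exfalso. apply hsq, (is_square_of_mul_sq_eq_sq m u v hv), eq_IZR.
    rewrite !mult_IZR.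
    replace (IZR u) with (- (IZR v * sqrt (IZR m))) by lra.
    pose proof (sqrt_sqrt_IZR m) as hs.
    set (r := sqrt (IZR m)) in *. rewrite <- hs by lia. ring.
Qed.

Lemma qsurd_inj (m u v u' v' : Z) : (0 < m)%Z -> ~ is_square m ->
  qsurd m u v = qsurd m u' v' -> u = u' /\ v = v'.
Proof.
  intros hm hsq h.
  destruct (qsurd_eq0 m (u - u') (v - v') hm hsq) as [h1 h2].
  - unfold qsurd in *. rewrite !minus_IZR. lra.
  - lia.
Qed.

Lemma qsurd_lin_comb (m a b c x y z w : Z) : (0 <= m)%Z ->
  IZR a * qsurd m x y + qsurd m b c * qsurd m z w
  = qsurd m (a * x + b * z + c * w * m) (a * y + b * w + c * z).
Proof.
  intros hm. unfold qsurd. rewrite !plus_IZR, !mult_IZR.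
  pose proof (sqrt_sqrt_IZR m hm) as hs.
  set (r := sqrt (IZR m)) in *. rewrite <- hs. ring.
Qed.

(* Multiplying a(p + q√m) = (b + c√m)(s + t√m) by the conjugate b - c√m
   gives (b² - c²m) s = a(bp - cmq) and (b² - c²m) t = a(bq - cp). *)
Lemma coprime_norm_divides (a b c m p q s t : Z) :
  Z.gcd a (b ^ 2 - c ^ 2 * m) = 1%Z ->
  (a * p = b * s + c * m * t)%Z -> (a * q = b * t + c * s)%Z ->
  (a | s)%Z /\ (a | t)%Z.
Proof.
  intros hcop hp hq. split; apply (Z.gauss _ (b ^ 2 - c ^ 2 * m)); auto.
  - exists (b * p - c * m * q)%Z.
    transitivity (b * (a * p) - c * m * (a * q))%Z; [rewrite hp, hq |]; ring.
  - exists (b * q - c * p)%Z.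
    transitivity (b * (a * q) - c * (a * p))%Z; [rewrite hp, hq |]; ring.
Qed.

Lemma reduced_solution_dominates (a b c m x y z w xb yb zb wb : Z) :
  (0 < a)%Z -> (0 < b)%Z -> (0 < c)%Z -> (0 < m)%Z ->
  Z.gcd a (b ^ 2 - c ^ 2 * m) = 1%Z ->
  (0 <= zb < a)%Z -> (0 <= wb < a)%Z -> (0 <= z)%Z -> (0 <= w)%Z ->
  (a * x + b * z + c * w * m = a * xb + b * zb + c * wb * m)%Z ->
  (a * y + b * w + c * z = a * yb + b * wb + c * zb)%Z ->
  (x <= xb)%Z /\ (y <= yb)%Z.
Proof.
  intros ha hb hc hm hcop hz hw hz0 hw0 e1 e2.
  destruct (coprime_norm_divides a b c m (xb - x) (yb - y) (z - zb) (w - wb))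
    as [[k hk] [l hl]]; [exact hcop | lia | lia |].
  assert (hk0 : (0 <= k)%Z) by nia.
  assert (hl0 : (0 <= l)%Z) by nia.
  assert (hx : (xb - x = b * k + c * m * l)%Z) by (apply (Z.mul_reg_l _ _ a); nia).
  assert (hy : (yb - y = c * k + b * l)%Z) by (apply (Z.mul_reg_l _ _ a); nia).
  split; nia.
Qed.

Theorem lemma6 (a b c m A B : Z)
  (ha : (0 < a)%Z) (hb : (0 < b)%Z) (hc : (0 < c)%Z) (hm : (0 < m)%Z)
  (hmsq : ~ is_square m)
  (hgcd : Z.gcd a (b ^ 2 - c ^ 2 * m) = 1%Z)
  (xb yb zb wb : Z)
  (hz : (0 <= zb < a)%Z) (hw : (0 <= wb < a)%Z)
  (hbar : IZR a * qsurd m xb yb + qsurd m b c * qsurd m zb wb = qsurd m A B) :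
  (exists x y z w : nat,
      IZR a * qsurd m (Z.of_nat x) (Z.of_nat y)
      + qsurd m b c * qsurd m (Z.of_nat z) (Z.of_nat w) = qsurd m A B)
  <-> ((0 <= xb)%Z /\ (0 <= yb)%Z).
Proof.
  split.
  - intros (x & y & z & w & h).
    rewrite <- hbar, !qsurd_lin_comb in h by lia.
    apply qsurd_inj in h as [e1 e2]; auto.
    destruct (reduced_solution_dominates a b c m (Z.of_nat x) (Z.of_nat y)
                (Z.of_nat z) (Z.of_nat w) xb yb zb wb); auto; lia.
  - intros [hx hy].
    exists (Z.to_nat xb), (Z.to_nat yb), (Z.to_nat zb), (Z.to_nat wb).
    rewrite !Z2Nat.id by lia. exact hbar.
Qed.
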